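(* Let $n\ge2$, $0<b_1\le\dots\le b_n$, and define $S>0$ by $S^{\frac{1}{n-1}}=\frac{2^{n+6}}{3}20^{\frac{n-2}{2}}\max_{1\le k\le n}20^{\frac{k(k-1)}{2}}\frac{b_1\cdots b_n}{b_k^n}$. Let $0<a_1\le\dots\le a_n$ satisfy $a_1\cdots a_n=b_1\cdots b_n$, $\frac{a_k}{a_{k-1}}<20$ for all $2\le k\le n-1$, and $\frac{a_n}{a_k}>20^{-\frac{n-2}{2}}S^{\frac{1}{n-1}}$ for all $1\le k\le n-1$. Then $b_k>2a_k$ for all $1\le k\le n-1$. *)

(* concrete reals R. Sequences indexed from 1 via nat -> R. *)
From Stdlib Require Import Reals Lra Lia.
Open Scope R_scope.

Fixpoint prod_1n (x : nat -> R) (n : nat) : R :=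
  match n with
  | O => 1
  | S m => prod_1n x m * x n
  end.

Fixpoint max_1n (f : nat -> R) (n : nat) : R :=
  match n with
  | O => f O (* unused: n >= 1 in all uses *)
  | S O => f 1%nat
  | S m => Rmax (max_1n f m) (f n)
  end.

Definition S_root (n : nat) (b : nat -> R) : R :=
  (2 ^ (n + 6) / 3) * Rpower 20 ((INR n - 2) / 2) *
  max_1n (fun k => Rpower 20 (INR k * (INR k - 1) / 2) * prod_1n b n / b k ^ n) n.

Definition S_of (n : nat) (b : nat -> R) : R :=
  Rpower (S_root n b) (INR n - 1).

(* Suppose b_k <= 2 a_k for some k <= n-1.  Since consecutive ratios of a_1, ..., a_(n-1)
   are below 20 and the sequence is nondecreasing, a_k^(n-1) <= 20^(k(k-1)/2) a_1 ... a_(n-1),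
   so the k-th term of the maximum defining S^(1/(n-1)) is at least a_n / (2^n a_k).  The
   hypothesis on a_n / a_k then gives a_n / a_k > (64/3) a_n / a_k, which is absurd. *)
From Stdlib Require Import Reals Lra Lia.
Open Scope R_scope.

Lemma Rpower_pos x y : 0 < Rpower x y.
Proof. unfold Rpower; apply exp_pos. Qed.

Lemma nondecr_pos (n : nat) (a : nat -> R) :
  0 < a 1%nat ->
  (forall k, (1 <= k)%nat -> (k < n)%nat -> a k <= a (S k)) ->
  forall j, (1 <= j)%nat -> (j <= n)%nat -> 0 < a j.
Proof.
  intros a1_pos a_mono j. induction j as [|j IH]; intros Hj1 Hjn; [lia|].
  destruct j as [|j]; [exact a1_pos|].
  specialize (IH ltac:(lia) ltac:(lia)).
  specialize (a_mono (S j) ltac:(lia) ltac:(lia)). lra.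
Qed.

Lemma prod_1n_pos (x : nat -> R) m :
  (forall j, (1 <= j)%nat -> (j <= m)%nat -> 0 < x j) -> 0 < prod_1n x m.
Proof.
  induction m as [|m IH]; intros x_pos; simpl; [lra|].
  apply Rmult_lt_0_compat; [apply IH; intros; apply x_pos; lia | apply x_pos; lia].
Qed.

Lemma max_1n_ge f m k : (1 <= k)%nat -> (k <= m)%nat -> f k <= max_1n f m.
Proof.
  induction m as [|m IH]; intros Hk1 Hkm; [lia|].
  destruct m as [|m].
  - replace k with 1%nat by lia. simpl. lra.
  - change (max_1n f (S (S m))) with (Rmax (max_1n f (S m)) (f (S (S m)))).
    destruct (Nat.eq_dec k (S (S m))) as [->|Hne].
    + apply Rmax_r.
    + eapply Rle_trans; [apply IH; lia | apply Rmax_l].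
Qed.

Section BoundedRatios.

Variables (N : nat) (a : nat -> R) (r : R).
Hypothesis r_pos : 0 < r.
Hypothesis a_pos : forall j, (1 <= j)%nat -> (j <= N)%nat -> 0 < a j.
Hypothesis a_mono : forall k, (1 <= k)%nat -> (k < N)%nat -> a k <= a (S k).
Hypothesis a_ratio : forall k, (2 <= k)%nat -> (k <= N)%nat -> a k / a (k - 1)%nat < r.

Lemma nondecr_le_add d j : (1 <= j)%nat -> (j + d <= N)%nat -> a j <= a (j + d)%nat.
Proof.
  induction d as [|d IH]; intros Hj Hjd.
  - rewrite Nat.add_0_r; lra.
  - specialize (IH Hj ltac:(lia)). rewrite Nat.add_succ_r.
    specialize (a_mono (j + d)%nat ltac:(lia) ltac:(lia)). lra.
Qed.

Lemma ratio_le_pow d j : (1 <= j)%nat -> (j + d <= N)%nat -> a (j + d)%nat <= a j * r ^ d.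
Proof.
  induction d as [|d IH]; intros Hj Hjd.
  - rewrite Nat.add_0_r; simpl; lra.
  - specialize (IH Hj ltac:(lia)). rewrite Nat.add_succ_r.
    specialize (a_ratio (S (j + d)) ltac:(lia) ltac:(lia)).
    replace (S (j + d) - 1)%nat with (j + d)%nat in a_ratio by lia.
    assert (0 < a (j + d)%nat) by (apply a_pos; lia).
    replace (a (S (j + d))) with (a (S (j + d)) / a (j + d)%nat * a (j + d)%nat)
      by (field; lra).
    simpl. nra.
Qed.

(* Each a_j with j <= m is compared to a_k through k - j ratio steps; the exponent is
   (k-1) + (k-2) + ... + (k-m). *)
Lemma pow_le_prod_1n_below k m : (1 <= k)%nat -> (k <= N)%nat -> (m <= k)%nat ->
  a k ^ m <= prod_1n a m * Rpower r (INR m * (2 * INR k - INR m - 1) / 2).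
Proof.
  intros Hk1 HkN. induction m as [|m IH]; intros Hm.
  - replace (INR 0 * (2 * INR k - INR 0 - 1) / 2) with 0 by (simpl; field).
    rewrite Rpower_O by lra. simpl. lra.
  - specialize (IH ltac:(lia)).
    replace (INR (S m) * (2 * INR k - INR (S m) - 1) / 2) with
      (INR m * (2 * INR k - INR m - 1) / 2 + INR (k - S m))
      by (rewrite minus_INR by lia; rewrite S_INR; field).
    rewrite Rpower_plus, Rpower_pow by lra.
    pose proof (ratio_le_pow (k - S m) (S m) ltac:(lia) ltac:(lia)) as Hstep.
    replace (S m + (k - S m))%nat with k in Hstep by lia.
    change (prod_1n a (S m)) with (prod_1n a m * a (S m)).
    replace (a k ^ S m) with (a k ^ m * a k) by (simpl; ring).
    assert (0 <= a k ^ m) by (apply pow_le, Rlt_le, a_pos; lia).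
    assert (0 <= a k) by (apply Rlt_le, a_pos; lia).
    apply Rle_trans with
      (prod_1n a m * Rpower r (INR m * (2 * INR k - INR m - 1) / 2) *
       (a (S m) * r ^ (k - S m))).
    + apply Rmult_le_compat; assumption.
    + right; ring.
Qed.

Lemma pow_le_prod_1n k : (1 <= k)%nat -> (k <= N)%nat ->
  a k ^ N <= prod_1n a N * Rpower r (INR k * (INR k - 1) / 2).
Proof.
  intros Hk1 HkN.
  assert (Hup : forall d, (k + d <= N)%nat ->
    a k ^ (k + d) <= prod_1n a (k + d) * Rpower r (INR k * (INR k - 1) / 2)).
  { induction d as [|d IH]; intros Hd.
    - rewrite Nat.add_0_r.
      replace (INR k * (INR k - 1) / 2) with (INR k * (2 * INR k - INR k - 1) / 2)
        by field.
      apply pow_le_prod_1n_below; lia.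
    - specialize (IH ltac:(lia)). rewrite Nat.add_succ_r.
      change (prod_1n a (S (k + d))) with (prod_1n a (k + d) * a (S (k + d))).
      replace (a k ^ S (k + d)) with (a k ^ (k + d) * a k) by (simpl; ring).
      pose proof (nondecr_le_add (S d) k Hk1 ltac:(lia)) as Hmono.
      rewrite Nat.add_succ_r in Hmono.
      assert (0 <= a k ^ (k + d)) by (apply pow_le, Rlt_le, a_pos; lia).
      assert (0 <= a k) by (apply Rlt_le, a_pos; lia).
      apply Rle_trans with
        (prod_1n a (k + d) * Rpower r (INR k * (INR k - 1) / 2) * a (S (k + d))).
      + apply Rmult_le_compat; assumption.
      + right; ring. }
  pose proof (Hup (N - k)%nat ltac:(lia)) as H.
  replace (k + (N - k))%nat with N in H by lia. exact H.
Qed.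

End BoundedRatios.

Lemma S_of_root_eq n b : (2 <= n)%nat -> 0 < S_root n b ->
  Rpower (S_of n b) (1 / (INR n - 1)) = S_root n b.
Proof.
  intros Hn HS. unfold S_of. rewrite Rpower_mult.
  apply le_INR in Hn. simpl in Hn.
  replace ((INR n - 1) * (1 / (INR n - 1))) with 1 by (field; lra).
  apply Rpower_1; exact HS.
Qed.

Definition S_term (n : nat) (b : nat -> R) (k : nat) : R :=
  Rpower 20 (INR k * (INR k - 1) / 2) * prod_1n b n / b k ^ n.

Lemma threshold_eq n b : (2 <= n)%nat ->
  (forall j, (1 <= j)%nat -> (j <= n)%nat -> 0 < b j) ->
  Rpower 20 (- ((INR n - 2) / 2)) * Rpower (S_of n b) (1 / (INR n - 1)) =
  2 ^ (n + 6) / 3 * max_1n (S_term n b) n.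
Proof.
  intros Hn b_pos.
  set (f := S_term n b).
  assert (Hmax : 0 < max_1n f n).
  { apply Rlt_le_trans with (f 1%nat); [|apply max_1n_ge; lia].
    unfold f, Rdiv. apply Rmult_lt_0_compat.
    - apply Rmult_lt_0_compat; [apply Rpower_pos | apply prod_1n_pos, b_pos].
    - apply Rinv_0_lt_compat, pow_lt, b_pos; lia. }
  assert (HS : 0 < S_root n b).
  { apply Rmult_lt_0_compat; [apply Rmult_lt_0_compat | exact Hmax].
    - unfold Rdiv; apply Rmult_lt_0_compat; [apply pow_lt|]; lra.
    - apply Rpower_pos. }
  rewrite S_of_root_eq, Rpower_Ropp by assumption.
  change (S_root n b) with (2 ^ (n + 6) / 3 * Rpower 20 ((INR n - 2) / 2) * max_1n f n).
  field. apply Rgt_not_eq, Rpower_pos.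
Qed.

Lemma term_ge_ratio n (a b : nat -> R) k c t : (1 <= n)%nat -> 0 < t ->
  0 < a k -> 0 < b k -> 0 < a n ->
  prod_1n a n = prod_1n b n ->
  a k ^ (n - 1) <= prod_1n a (n - 1) * c ->
  b k <= t * a k ->
  a n / (t ^ n * a k) <= c * prod_1n b n / b k ^ n.
Proof.
  intros Hn t_pos ak_pos bk_pos an_pos Hprod Hpow Hb.
  assert (Hsplit : prod_1n a n = prod_1n a (n - 1) * a n).
  { destruct n as [|m]; [lia|]. replace (S m - 1)%nat with m by lia. reflexivity. }
  assert (Hbn : b k ^ n <= (t * a k) ^ n) by (apply pow_incr; lra).
  assert (0 < b k ^ n) by (apply pow_lt; lra).
  assert (0 < a k ^ (n - 1)) by (apply pow_lt; lra).
  assert (Hpowk : (t * a k) ^ n = t ^ n * a k ^ (n - 1) * a k).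
  { rewrite Rpow_mult_distr.
    destruct n as [|m]; [lia|]. replace (S m - 1)%nat with m by lia. simpl; ring. }
  rewrite <- Hprod, Hsplit.
  apply Rle_trans with (a k ^ (n - 1) * a n / (t * a k) ^ n).
  - right. rewrite Hpowk. field. split; [lra|split; [lra|]]. apply pow_nonzero; lra.
  - unfold Rdiv. apply Rle_trans with (c * (prod_1n a (n - 1) * a n) * / (t * a k) ^ n).
    + apply Rmult_le_compat_r; [left; apply Rinv_0_lt_compat; lra | nra].
    + apply Rmult_le_compat_l; [|apply Rinv_le_contravar; assumption].
      rewrite <- Hsplit, Hprod. nra.
Qed.

Theorem lemma3p6 (n : nat) (a b : nat -> R) :
  (2 <= n)%nat ->
  0 < b 1%nat ->
  (forall k, (1 <= k)%nat -> (k < n)%nat -> b k <= b (S k)) ->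
  0 < a 1%nat ->
  (forall k, (1 <= k)%nat -> (k < n)%nat -> a k <= a (S k)) ->
  prod_1n a n = prod_1n b n ->
  (forall k, (2 <= k)%nat -> (k <= n - 1)%nat -> a k / a (k - 1)%nat < 20) ->
  (forall k, (1 <= k)%nat -> (k <= n - 1)%nat ->
     a n / a k > Rpower 20 (- ((INR n - 2) / 2)) * Rpower (S_of n b) (1 / (INR n - 1))) ->
  forall k, (1 <= k)%nat -> (k <= n - 1)%nat -> b k > 2 * a k.
Proof.
  intros Hn b1_pos b_mono a1_pos a_mono Hprod Hratio Hbig k Hk1 Hk2.
  apply Rnot_le_gt; intro Hle.
  pose proof (nondecr_pos n a a1_pos a_mono) as a_pos.
  pose proof (nondecr_pos n b b1_pos b_mono) as b_pos.
  assert (Hpow : a k ^ (n - 1) <=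
                 prod_1n a (n - 1) * Rpower 20 (INR k * (INR k - 1) / 2)).
  { apply pow_le_prod_1n; try assumption; try lra.
    - intros j ? ?; apply a_pos; lia.
    - intros j ? ?; apply a_mono; lia. }
  assert (Hterm : a n / (2 ^ n * a k) <= S_term n b k).
  { apply term_ge_ratio with (a := a); try assumption; try lra; try lia;
      apply a_pos || apply b_pos; lia. }
  pose proof (max_1n_ge (S_term n b) n k Hk1 ltac:(lia)) as Hmax.
  specialize (Hbig k Hk1 Hk2). rewrite threshold_eq in Hbig by assumption.
  assert (0 < a n / a k) by (apply Rdiv_lt_0_compat; apply a_pos; lia).
  assert (Hscale : 2 ^ (n + 6) / 3 * (a n / (2 ^ n * a k)) = 64 / 3 * (a n / a k)).
  { rewrite pow_add. simpl. field. split; [apply Rgt_not_eq, a_pos; lia|].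
    apply pow_nonzero; lra. }
  assert (2 ^ (n + 6) / 3 * (a n / (2 ^ n * a k)) <= 2 ^ (n + 6) / 3 * max_1n (S_term n b) n).
  { apply Rmult_le_compat_l; [apply Rlt_le, Rdiv_lt_0_compat; [apply pow_lt|]; lra|lra]. }
  lra.
Qed.
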